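(* Let $\mathbb{K}$ be a field, $\mathbf{S}=(s_i)_{i\ge0}$ a sequence over $\mathbb{K}$ (with $s_i=0$ for $i<0$), and $\Theta(t)=t^{-1}\sum_{i\ge0}s_it^{-i}\in\mathbb{K}(\!(t^{-1})\!)$. For an integer $k\ge0$ write the continued fraction expansion $\langle t^k\Theta(t)\rangle=[0;A_1(t),A_2(t),\dots]$. Then the $k$-th diagonal $(\widetilde W(\mathbf{S})[m,k])_{m\ge0}$ of the number wall consists of successive blocks of zeros of lengths $\deg A_i-1$ separated by single nonzero entries. Explicitly, for $m\ge0$, $\widetilde W(\mathbf{S})[m,k]\ne0$ if and only if $m=\sum_{i=1}^{j}\deg A_i-1$ for some $j\ge1$.
   Context: $\langle\cdot\rangle$ denotes the fractional part of a Laurent series (removing all non-negative powers of $t$). Continued fraction partial quotients are polynomials of degree $\ge1$ after the zeroth. The number wall of $\mathbf{S}$: for $m\ge0$ and $n\in\mathbb{Z}$, $W(\mathbf{S})[m,n]=\det\big(s_{n-i+j}\big)_{0\le i,j\le m}$ (the determinant of the $(m+1)\times(m+1)$ Toeplitz matrix whose first row is $s_n,\dots,s_{n+m}$ and whose first column is $s_n,s_{n-1},\dots,s_{n-m}$); also $W[-1,n]=1$. The $k$-th diagonal entries are $\widetilde W(\mathbf{S})[m,k]:=W(\mathbf{S})[m,m+k]$. *)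

From HB Require Import structures.
From mathcomp Require Import all_boot all_order all_algebra.
Set Implicit Arguments. Unset Strict Implicit. Unset Printing Implicit Defensive.
Import Order.TTheory GRing.Theory Num.Theory.
Local Open Scope ring_scope.

(* We represent it as a pair (P, f) with P : {poly K} and f : nat -> K, standing for
       P(t) + sum_{q >= 0} f q * t^{-(q+1)}.                                      *)
Definition laurent (K : fieldType) := ({poly K} * (nat -> K))%type.

(* coefficient of t^n, n : int  (Negz q = -(q+1)) *)
Definition lcoef (K : fieldType) (x : laurent K) (n : int) : K :=
  match n with
  | Posz p => x.1`_p
  | Negz q => x.2 q
  end.

(* coefficient of t^n in the product x*y : the (finite) convolution
   sum_i lcoef x i * lcoef y (n - i).  Nonzero terms need i < size x.1 and
   n - i < size y.1, so i ranges over [n - size y.1, size x.1]; the sum below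
   runs over i = size x.1 - j for j = 0 .. size x.1 + size y.1 + |n|, which covers it. *)
Definition lmul_coef (K : fieldType) (x y : laurent K) (n : int) : K :=
  \sum_(j < (size x.1 + size y.1 + `|n| + 1)%N)
     lcoef x ((size x.1)%:Z - j%:Z) * lcoef y (n - (size x.1)%:Z + j%:Z).

Definition lmul_is_one (K : fieldType) (x y : laurent K) : Prop :=
  forall n : int, lmul_coef x y n = (n == 0)%:R.

Definition theta (K : fieldType) (s : nat -> K) : laurent K := (0, s).

(* fractional part < t^k x > : its coefficient of t^{-(q+1)} is the coefficient
   of t^{-(q+1)-k} in x *)
Definition frac_mulXk (K : fieldType) (k : nat) (x : laurent K) : nat -> K :=
  fun q => lcoef x (Negz q - k%:Z).

(* Continued fraction expansion  x0 = [0; A_1, A_2, ...]  of a fractional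
   Laurent series x0 (with x0 = frac part r 0).  r i is the i-th complete-quotient
   remainder (fractional part); as long as r i <> 0 one has
        1 / r_i = A_{i+1} + r_{i+1},  i.e.  r_i * (A_{i+1} + r_{i+1}) = 1,
   so A_{i+1} is the polynomial part of 1/r_i and r_{i+1} its fractional part.
   The expansion stops at the first i with r i = 0 (then A_{i+1}, ... are
   not partial quotients). *)
Definition nonzero_frac (K : fieldType) (f : nat -> K) : Prop := exists q, f q != 0.

Definition is_cf_expansion (K : fieldType) (x0 : nat -> K)
    (A : nat -> {poly K}) (r : nat -> nat -> K) : Prop :=
  r 0%N = x0 /\
  forall i : nat, nonzero_frac (r i) ->
    lmul_is_one ((0 : {poly K}), r i) (A i.+1, r i.+1).

Definition deg (K : fieldType) (p : {poly K}) : nat := (size p).-1.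

Definition sext (K : fieldType) (s : nat -> K) (i : int) : K :=
  match i with Posz p => s p | Negz _ => 0 end.

Definition wall (K : fieldType) (s : nat -> K) (m : nat) (n : int) : K :=
  \det (\matrix_(i < m.+1, j < m.+1) sext s (n - (i : nat)%:Z + (j : nat)%:Z)).

Definition wdiag (K : fieldType) (s : nat -> K) (m : nat) (k : int) : K :=
  wall s m ((m : nat)%:Z + k).

From mathcomp Require Import all_boot all_order all_algebra.
From mathcomp Require Import ring zify.
From Stdlib Require Import Classical_Prop.
Import Order.TTheory GRing.Theory Num.Theory.
Local Open Scope ring_scope.
Set Implicit Arguments.
Unset Strict Implicit.

(* In the variable X = t^-1, W~(S)[m,k] is the determinant of the Toeplitz
   matrix of C(X) = sum_q s_(q+k) X^q, which is singular exactly when C has a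
   defective Pade approximant: Q C = R mod X^(2m+1) with deg Q <= m and
   deg R < m.  One step r = 1 / (A + r') of the continued fraction, with
   deg A = a + 1, says C = X^a / D where D = rev A + X^(a+2) E and E is the
   series of r'.  Hence the indices m < a are singular for C, the index a is
   not, and the index m + a + 1 is singular for C iff m is singular for E.
   Induction along the expansion yields the blocks of zeros of length
   deg A_i - 1 separated by the nonzero entries. *)

Section NumberWallDiagonal.
Context {K : fieldType}.
Implicit Types (c e : nat -> K) (p Q R A : {poly K}).

Definition trunc_series N c : {poly K} := \poly_(i < N) c i.

Definition conv_coef Q c i : K := \sum_(a < i.+1) Q`_a * c (i - a)%N.

Lemma coefM_trunc_series N Q c i :
  (i < N)%N -> (Q * trunc_series N c)`_i = conv_coef Q c i.
Proof.
move=> ltiN; rewrite coefM; apply: eq_bigr => a _; rewrite coef_poly.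
by rewrite (leq_ltn_trans (leq_subr a i) ltiN).
Qed.

Lemma polyXn_neq0 n : 'X^n != 0 :> {poly K}.
Proof. by rewrite -size_poly_gt0 size_polyXn. Qed.

Lemma dvdp_XnP n p : reflect (forall i, (i < n)%N -> p`_i = 0) ('X^n %| p).
Proof.
apply: (iffP (modp_eq0P _ _)); rewrite -Pdiv.IdomainMonic.take_poly_modp.
  move=> p0 i ltin.
  by have := coef_take_poly n p i; rewrite ltin p0 coef0.
move=> p0; apply/polyP => i; rewrite coef_take_poly coef0.
by case: ltnP => // /p0.
Qed.

Lemma leq_size_mul (p q : {poly K}) m n :
  (size p <= m)%N -> (size q <= n.+1)%N -> (size (p * q)%R <= m + n)%N.
Proof. by move=> sp sq; have := size_polyMleq p q; lia. Qed.

(* The rows of the Toeplitz matrix (c_(m-i+j))_(0<=i,j<=m) are linearly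
   dependent, with the coefficients of Q as the dependency. *)
Definition toeplitz_singular c m : Prop :=
  exists Q, [/\ Q != 0, (size Q <= m.+1)%N &
                forall j, (j <= m)%N -> conv_coef Q c (m + j) = 0].

Lemma toeplitz_singular_pade N c m : ((m + m).+1 <= N)%N ->
  toeplitz_singular c m <->
  exists Q R, [/\ Q != 0, (size Q <= m.+1)%N, (size R <= m)%N &
                  'X^((m + m).+1) %| Q * trunc_series N c - R].
Proof.
move=> leN; split=> [[Q [Q0 sQ QcE]] | [Q [R [Q0 sQ sR dvdQR]]]].
  exists Q, (\poly_(i < m) (Q * trunc_series N c)`_i); split=> //.
  apply/dvdp_XnP => i lti; rewrite coefB coef_poly.
  case: ltnP => [_ | lemi]; first by rewrite subrr.
  by rewrite subr0 -(subnKC lemi) coefM_trunc_series ?QcE //; lia.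
exists Q; split=> // j lejm.
rewrite -(@coefM_trunc_series N); last by lia.
have /dvdp_XnP/(_ (m + j)%N) := dvdQR.
rewrite coefB (nth_default _ (leq_trans sR (leq_addr _ _))) subr0; apply; lia.
Qed.

Lemma toeplitz_singular0 c m : (forall q, c q = 0) -> toeplitz_singular c m.
Proof.
move=> c0; exists 1; split; [exact: oner_neq0 | by rewrite size_poly1 |].
by move=> j _; rewrite /conv_coef big1 // => a _; rewrite c0 mulr0.
Qed.

Definition reciprocal A : {poly K} := \poly_(i < size A) A`_((size A).-1 - i).

(* With X = t^-1, the Laurent series A(t) + sum_q e_q t^-(q+1) equals
   X^-(deg A) times this power series, up to order N + size A. *)
Definition cf_series N A e : {poly K} :=
  reciprocal A + 'X^(size A) * trunc_series N e.

Lemma coef_cf_series N A e j : (j < N)%N ->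
  (cf_series N A e)`_j = lcoef (A, e) ((size A)%:Z - 1 - j%:Z).
Proof.
move=> ltjN; rewrite coefD coefXnM !coef_poly.
case: ltnP => [ltjA | leAj].
  by rewrite addr0 (_ : _ - _ - _ = Posz ((size A).-1 - j)) //; lia.
rewrite add0r ifT; last by lia.
by rewrite (_ : _ - _ - _ = Negz (j - size A)) // NegzE; lia.
Qed.

Lemma coef0_cf_series N A e : A != 0 -> (cf_series N A e)`_0 != 0.
Proof.
rewrite -size_poly_gt0 => sA; rewrite coefD coefXnM sA addr0 coef_poly sA subn0.
by rewrite -lead_coefE lead_coef_eq0 -size_poly_gt0.
Qed.

Lemma coprimep_Xn_cf_series n N A e : A != 0 -> coprimep 'X^n (cf_series N A e).
Proof.
move=> A0; apply: coprimep_expl; rewrite coprimep_sym -[X in coprimep _ X]subr0.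
by rewrite -polyC0 coprimep_XsubC rootE horner_coef0 coef0_cf_series.
Qed.

Lemma lmul_coef_frac c y n :
  lmul_coef (0, c) y n = \sum_(q < size y.1 + `|n|) c q * lcoef y (n + (q.+1)%:Z).
Proof.
rewrite /lmul_coef size_poly0 add0n addn1 big_ord_recl /= coef0 mul0r add0r.
by apply: eq_bigr => q _; rewrite add0n subn0 subr0 /bump /= add1n.
Qed.

Lemma size_cf_quotient c A e : lmul_is_one (0, c) (A, e) -> (1 < size A)%N.
Proof.
move=> cf_one; rewrite ltnNge; apply/negP => sA.
have := cf_one 0; rewrite lmul_coef_frac big1 => [/esym/eqP | q _].
  by rewrite oner_eq0.
by rewrite /= add0n nth_default ?mulr0 // (leq_trans sA).
Qed.

Section ContinuedFractionStep.
Variables (c e : nat -> K) (A : {poly K}) (a : nat).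
Hypotheses (sizeA : size A = a.+2) (cf_one : lmul_is_one (0, c) (A, e)).

Lemma cf_quotient_neq0 : A != 0.
Proof. by rewrite -size_poly_gt0 sizeA. Qed.

(* With X = t^-1 one has r = X C(X) and A + r' = X^-(deg A) D(X), so that
   r (A + r') = 1 becomes C D = X^(deg A - 1). *)
Lemma cf_relation N : 'X^N %| trunc_series N c * cf_series N A e - 'X^a.
Proof.
apply/dvdp_XnP => i ltiN.
have := cf_one (a%:Z - i%:Z); rewrite lmul_coef_frac subr_eq0 eqz_nat => one_i.
rewrite coefB coefXn eq_sym -one_i coefM; apply/eqP; rewrite subr_eq0; apply/eqP.
have le_i : (i.+1 <= size A + `|a%:Z - i%:Z|)%N by rewrite sizeA; lia.
pose F q := (trunc_series N c)`_q * (cf_series N A e)`_(i - q).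
rewrite (big_ord_widen _ F le_i) big_mkcond; apply: eq_bigr => [[q ltq]] _; rewrite /F /=.
case: ltnP => [ltqi | leiq].
  rewrite coef_poly ifT; last by lia.
  by rewrite coef_cf_series; [congr (_ * lcoef _ _); lia | lia].
rewrite (_ : _ + _ = Posz (a.+1 + q - i)) /=; last by lia.
by rewrite nth_default ?mulr0 // sizeA; lia.
Qed.

Lemma trunc_series_dvdXn N : (a <= N)%N -> 'X^a %| trunc_series N c.
Proof.
move=> leaN; have := dvdp_trans (dvdp_exp2l 'X leaN) (cf_relation N).
rewrite (dvdp_subl _ (dvdpp _)) Gauss_dvdpl //.
exact: coprimep_Xn_cf_series cf_quotient_neq0.
Qed.

Lemma pade_cf_factor m N Q R : (a <= m)%N -> ((m + m).+1 <= N)%N ->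
    Q != 0 -> (size Q <= m.+1)%N -> (size R <= m)%N ->
    'X^((m + m).+1) %| Q * trunc_series N c - R ->
  exists2 P : {poly K}, P != 0 /\ (size P <= m - a)%N &
    'X^((m + m).+1 - a) %| Q - P * cf_series N A e.
Proof.
move=> leam leN Q0 sQ sR dvdQR; set C := trunc_series N c; set D := cf_series N A e.
have dvdCD : 'X^((m + m).+1) %| C * D - 'X^a.
  exact: dvdp_trans (dvdp_exp2l _ leN) (cf_relation N).
have dvdQRD : 'X^((m + m).+1) %| Q * 'X^a - R * D.
  have -> : Q * 'X^a - R * D = (Q * C - R) * D - Q * (C * D - 'X^a) by ring.
  by apply: dvdp_sub; [apply: dvdp_mulr | apply: dvdp_mull].
have dvdRD : 'X^a %| R * D.
  have lea : (a <= (m + m).+1)%N by lia.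
  by have := dvdp_trans (dvdp_exp2l 'X lea) dvdQRD; rewrite dvdp_subr ?dvdp_mulIr.
rewrite Gauss_dvdpl ?coprimep_Xn_cf_series ?cf_quotient_neq0 // in dvdRD.
set P := R %/ 'X^a; have RE : R = P * 'X^a by rewrite divpK.
have dvdQPD : 'X^((m + m).+1 - a) %| Q - P * D.
  rewrite -(dvdp_mul2r _ _ (polyXn_neq0 a)) -exprD subnK; last by lia.
  by rewrite mulrBl -mulrA [D * _]mulrC mulrA -RE.
exists P => //; split; last first.
  by rewrite size_divp ?polyXn_neq0 // size_polyXn leq_sub2r.
apply: contraTneq dvdQPD => ->; rewrite mul0r subr0.
by apply/negP => /(dvdp_leq Q0); rewrite size_polyXn ltnNge (leq_trans sQ) //; lia.
Qed.

Lemma toeplitz_singular_lt m : (m < a)%N -> toeplitz_singular c m.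
Proof.
move=> ltma; apply/(toeplitz_singular_pade c (leq_addr a _)).
exists 'X^m, 0; rewrite size_polyXn size_poly0 subr0; split=> //.
  exact: polyXn_neq0.
rewrite (dvdp_trans (dvdp_exp2l _ (_ : _ <= m + a)%N)) //; first by lia.
by rewrite exprD dvdp_mul // trunc_series_dvdXn //; lia.
Qed.

Lemma toeplitz_nonsingular : ~ toeplitz_singular c a.
Proof.
move/(toeplitz_singular_pade c (leqnn _)) => [Q [R [Q0 sQ sR dvdQR]]].
have [P [P0 sP] _] := pade_cf_factor (leqnn a) (leqnn _) Q0 sQ sR dvdQR.
by move: sP; rewrite subnn leqn0 size_poly_eq0 (negbTE P0).
Qed.

Lemma size_mul_reciprocal (P : {poly K}) m :
  (size P <= m.+1)%N -> (size (P * reciprocal A)%R <= m + a.+2)%N.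
Proof. by move=> sP; rewrite -addSnnS leq_size_mul // -sizeA size_poly. Qed.

Lemma toeplitz_singular_shiftl m :
  toeplitz_singular c (m + a.+1) -> toeplitz_singular e m.
Proof.
set n := (m + a.+1)%N; set N := (n + n).+1.
move/(toeplitz_singular_pade c (leqnn N)) => [Q [R [Q0 sQ sR dvdQR]]].
have lean : (a <= n)%N by rewrite /n; lia.
have [P [P0 sP] dvdQPD] := pade_cf_factor lean (leqnn N) Q0 sQ sR dvdQR.
have leN : ((m + m).+1 <= N)%N by rewrite /N /n; lia.
apply/(toeplitz_singular_pade e leN).
set T := Q - P * reciprocal A.
have QPDE : Q - P * cf_series N A e = T - 'X^(a.+2) * (P * trunc_series N e).
  by rewrite /T /cf_series sizeA; ring.
have dvdT : 'X^(a.+2) %| T.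
  have le : (a.+2 <= N - a)%N by rewrite /N /n; lia.
  have := dvdp_trans (dvdp_exp2l 'X le) dvdQPD.
  by rewrite QPDE dvdp_subl // dvdp_mulIl.
set S := T %/ 'X^(a.+2); have TE : T = S * 'X^(a.+2) by rewrite divpK.
exists P, S; split => //.
- by rewrite (leq_trans sP) /n //; lia.
- have sT : (size T <= m + a.+2)%N.
    apply: leq_trans (size_polyD _ _) _.
    by rewrite geq_max size_polyN size_mul_reciprocal ?(leq_trans sQ) /n ?andbT //; lia.
  by rewrite size_divp ?polyXn_neq0 // size_polyXn leq_subLR addnC.
move: dvdQPD; rewrite QPDE TE (_ : N - a = (m + m).+1 + a.+2)%N; last first.
  by rewrite /N /n; lia.
rewrite exprD (_ : S * _ - _ = - ((P * trunc_series N e - S) * 'X^(a.+2))); last by ring.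
by rewrite dvdpNr dvdp_mul2r ?polyXn_neq0.
Qed.

Lemma toeplitz_singular_shiftr m :
  toeplitz_singular e m -> toeplitz_singular c (m + a.+1).
Proof.
set n := (m + a.+1)%N; set N := (n + n).+1.
have leN : ((m + m).+1 <= N)%N by rewrite /N /n; lia.
move/(toeplitz_singular_pade e leN) => [P [S [P0 sP sS dvdPS]]].
apply/(toeplitz_singular_pade c (leqnn N)).
set C := trunc_series N c; set E := trunc_series N e.
set Q := P * reciprocal A + 'X^(a.+2) * S.
have R0 : P * 'X^a != 0 by rewrite mulf_neq0 ?polyXn_neq0.
have sR : (size (P * 'X^a)%R <= n)%N by rewrite size_mulXn // /n; lia.
have dvdQR : 'X^N %| Q * C - P * 'X^a.
  have -> : Q * C - P * 'X^a =
      P * (C * cf_series N A e - 'X^a) - 'X^(a.+2) * (P * E - S) * C.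
    by rewrite /Q /cf_series sizeA -/E; ring.
  apply: dvdp_sub; first by rewrite dvdp_mull ?cf_relation.
  rewrite (_ : N = a.+2 + (m + m).+1 + a)%N; last by rewrite /N /n; lia.
  rewrite !exprD; apply: dvdp_mul; first exact: dvdp_mul.
  by apply: trunc_series_dvdXn; rewrite /N /n; lia.
exists Q, (P * 'X^a); split => //.
- apply: contraTneq dvdQR => ->; rewrite mul0r sub0r dvdpNr.
  by apply/negP => /(dvdp_leq R0); rewrite size_polyXn ltnNge (leq_trans sR) //; lia.
- apply: leq_trans (size_polyD _ _) _.
  rewrite geq_max /n -addnS size_mul_reciprocal //=.
  by rewrite mulrC leq_size_mul ?size_polyXn.
Qed.

Lemma toeplitz_singular_shift m :
  toeplitz_singular c (m + a.+1) <-> toeplitz_singular e m.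
Proof. by split; [apply: toeplitz_singular_shiftl | apply: toeplitz_singular_shiftr]. Qed.

End ContinuedFractionStep.

Lemma conv_coef_rVpoly m (v : 'rV[K]_m.+1) c j : (j <= m)%N ->
  conv_coef (rVpoly v) c (m + j) = \sum_(i < m.+1) v 0 i * c (m - i + j)%N.
Proof.
move=> lejm; have lem : (m.+1 <= (m + j).+1)%N by rewrite ltnS leq_addr.
rewrite /conv_coef (bigID (fun i : 'I_(m + j).+1 => (i < m.+1)%N)) /=.
rewrite [X in _ + X]big1 => [|i /negbTE ltim]; last first.
  by rewrite coef_rVpoly insubF ?mul0r.
rewrite addr0 -(big_ord_widen _ (fun i => (rVpoly v)`_i * c (m + j - i)%N) lem).
apply: eq_bigr => i _; rewrite coef_rVpoly_ord.
by congr (_ * c _); have := ltn_ord i; lia.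
Qed.

Lemma wdiag_neq0_iff s k c m : (forall q, c q = s (q + k)%N) ->
  wdiag s m k%:Z != 0 <-> ~ toeplitz_singular c m.
Proof.
move=> cE; pose M := \matrix_(i < m.+1, j < m.+1)
  sext s (m%:Z + k%:Z - (i : nat)%:Z + (j : nat)%:Z).
have mulM (v : 'rV_m.+1) (j : 'I_m.+1) : (v *m M) 0 j = conv_coef (rVpoly v) c (m + j).
  rewrite conv_coef_rVpoly; last exact: ltn_ord j.
  rewrite mxE; apply: eq_bigr => i _; rewrite mxE cE.
  by rewrite (_ : _ + _ - _ + _ = Posz (m - i + j + k)) //; have := ltn_ord i; lia.
have -> : wdiag s m k%:Z = \det M by [].
split=> [detM [Q [Q0 sQ QcE]] | nonsing].
  move/negP: detM; apply; apply/det0P; exists (poly_rV Q).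
    by apply: contra Q0 => /eqP Q0; rewrite -(poly_rV_K sQ) Q0 linear0.
  by apply/rowP => j; rewrite mulM mxE poly_rV_K // QcE // -ltnS.
apply/negP => /det0P [v v0 vM]; apply: nonsing; exists (rVpoly v); split.
- by apply: contra v0 => /eqP v0; rewrite -[v]rVpolyK v0 linear0.
- exact: size_poly.
- move=> j lejm; have := congr1 (fun w : 'rV_m.+1 => w 0 (inord j)) vM.
  by rewrite /= mulM inordK ?mxE.
Qed.

Section Pivots.
Variables (A : nat -> {poly K}) (r : nat -> nat -> K).
Hypothesis cf_one :
  forall i, nonzero_frac (r i) -> lmul_is_one (0, r i) (A i.+1, r i.+1).

(* The diagonal positions at which the expansion started at r_i predicts a
   nonzero number wall entry. *)
Definition cf_pivot i m : Prop :=
  exists j, (0 < j)%N /\ (forall l, (l < j)%N -> nonzero_frac (r (i + l))) /\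
    m = (\sum_(i.+1 <= l < (i + j).+1) deg (A l) - 1)%N.

Lemma big_ltn_addS i j (F : nat -> nat) :
  (\sum_(i.+1 <= l < (i + j.+1).+1) F l =
     F i.+1 + \sum_(i.+2 <= l < (i.+1 + j).+1) F l)%N.
Proof. by rewrite addnS -addSn big_ltn // ltnS leq_addr. Qed.

Lemma deg_cf_quotient_gt0 i : nonzero_frac (r i) -> (0 < deg (A i.+1))%N.
Proof. by move/cf_one/size_cf_quotient; rewrite /deg; lia. Qed.

Lemma cf_pivot_lt i m : (m < (deg (A i.+1)).-1)%N -> ~ cf_pivot i m.
Proof. by move=> ltm [[|j] [pos [_ mE]]] //; rewrite big_ltn_addS in mE; lia. Qed.

Lemma cf_pivot_deg i : nonzero_frac (r i) -> cf_pivot i (deg (A i.+1)).-1.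
Proof.
move=> nz_i; exists 1%N; split=> //; split; last by rewrite addn1 big_nat1 subn1.
by move=> [|l] //; rewrite addn0.
Qed.

Lemma cf_pivot_shift i m : nonzero_frac (r i) ->
  cf_pivot i (m + deg (A i.+1)) <-> cf_pivot i.+1 m.
Proof.
move=> nz_i; have := deg_cf_quotient_gt0 nz_i.
split=> [[[|[|j]] [pos [nz_il mE]]] | [[|j] [pos [nz_il mE]]]] //.
- by rewrite big_ltn_addS big_geq // in mE; lia.
- exists j.+1; split=> //; split=> [l ltl | ]; first by rewrite addSnnS; apply: nz_il.
  have := deg_cf_quotient_gt0 (nz_il 1%N isT); rewrite addn1 => deg_gt0.
  rewrite 2!big_ltn_addS in mE; rewrite big_ltn_addS; lia.
- exists j.+2; split=> //; split=> [[|l] ltl | ]; first by rewrite addn0.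
    by rewrite addnS -addSn; apply: nz_il.
  have := deg_cf_quotient_gt0 (nz_il 0%N isT); rewrite addn0 => deg_gt0.
  rewrite big_ltn_addS in mE; rewrite 2!big_ltn_addS; lia.
Qed.

Lemma toeplitz_nonsingular_cf_pivot m i : ~ toeplitz_singular (r i) m <-> cf_pivot i m.
Proof.
elim/ltn_ind: m i => m IHm i.
have [nz_i | z_i] := classic (nonzero_frac (r i)); last first.
  split=> [|[[|j] [pos [nz_il _]]]] //; last by have := nz_il 0%N isT; rewrite addn0.
  case; apply: toeplitz_singular0 => q.
  by case: (eqVneq (r i q) 0) => // nz_q; case: z_i; exists q.
have [a sizeA] : exists a, size (A i.+1) = a.+2.
  by exists (size (A i.+1)).-2; have := size_cf_quotient (cf_one nz_i); lia.
have degA : deg (A i.+1) = a.+1 by rewrite /deg sizeA.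
have cf_i := cf_one nz_i.
case: (ltngtP m a) => [ltma | ltam | ->].
- have not_pivot : ~ cf_pivot i m by apply: cf_pivot_lt; rewrite degA.
  by split=> [/(_ (toeplitz_singular_lt sizeA cf_i ltma)) | /not_pivot].
- have [m' mE] : exists m', m = (m' + a.+1)%N by exists (m - a.+1)%N; rewrite subnK.
  rewrite mE (toeplitz_singular_shift sizeA cf_i) (IHm m'); last by lia.
  by rewrite -degA cf_pivot_shift.
- split=> _; last exact: toeplitz_nonsingular sizeA cf_i.
  by have := cf_pivot_deg nz_i; rewrite degA.
Qed.

End Pivots.

End NumberWallDiagonal.

Theorem lemma4p2 (K : fieldType) (s : nat -> K) (k : nat)
    (A : nat -> {poly K}) (r : nat -> nat -> K) :
  is_cf_expansion (frac_mulXk k (theta s)) A r ->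
  forall m : nat,
    wdiag s m k%:Z != 0 <->
    exists j : nat, (0 < j)%N /\
      (forall i : nat, (i < j)%N -> nonzero_frac (r i)) /\
      m = ((\sum_(1 <= i < j.+1) deg (A i)) - 1)%N.
Proof.
move=> [r0E cf_one] m.
have r0_shift q : r 0%N q = s (q + k)%N.
  by rewrite r0E /frac_mulXk (_ : _ - _ = Negz (q + k)) // NegzE; lia.
exact: iff_trans (wdiag_neq0_iff m r0_shift) (toeplitz_nonsingular_cf_pivot cf_one m 0).
Qed.
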